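(* Let $G$ be a connected graph, $v\in V(G)$, and let $G_v$ be the graph obtained from $G$ by adding a new vertex $v'$ adjacent to $v$ and to all vertices of $N_G(v)$. Let $j\in\{1,2\}$. Then the subgraph of $\mathcal{R}(G_v)$ induced by $\{T(0,j)\mid T\in V(\mathcal{R}(G))\}$ is isomorphic to $\mathcal{R}(G)$.
   Context: For a connected graph $G$, a search tree on $G$ is a rooted tree with vertex set $V(G)$ defined recursively: its root is some vertex $r\in V(G)$, and the children of $r$ are the roots of search trees on the connected components of $G-r$. For a rooted tree $T$ and $w\in V(T)$, $T|w$ denotes the subtree rooted at $w$. Let $T$ be a search tree on $G$, let $b$ be a child of $a$ in $T$, and let $p$ be the parent of $a$ (if it exists). The $ab$-rotation transforms $T$ into the search tree $T'$ in which: $a$ is a child of $b$ and $b$ is a child of $p$ (or $b$ is the root if $a$ was the root); every subtree of $a$ in $T$ other than $T|b$ is a subtree of $a$ in $T'$; and every subtree $S$ of $b$ in $T$ is a subtree of $a$ in $T'$ if $a$ is adjacent in $G$ to some vertex of $S$, and a subtree of $b$ in $T'$ otherwise. The rotation graph $\mathcal{R}(G)$ has the search trees on $G$ as vertices, two adjacent iff they differ by one rotation. For a search tree $T$ on $G$: $T(0,1)$ is the rooted tree with root $v'$ whose only subtree is $T$; $T(0,2)$ is the rooted tree with root $v$ whose only subtree is the tree obtained from $T$ by renaming $v$ as $v'$. *)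

From mathcomp Require Import all_boot.
Set Implicit Arguments. Unset Strict Implicit. Unset Printing Implicit Defensive.

Section Defs.
Variable V : finType.

(* A graph on V is given by an adjacency relation e (assumed symmetric and
   irreflexive in the theorem). *)

Definition induced (e : rel V) (A : {set V}) : rel V :=
  [rel x y | [&& x \in A, y \in A & e x y]].

Definition connected_on (e : rel V) (A : {set V}) : bool :=
  [forall x in A, forall y in A, connect (induced e A) x y].

Definition comp (e : rel V) (A : {set V}) (x : V) : {set V} :=
  [set y in A | connect (induced e A) x y].

(* A rooted tree on vertex set V is encoded by its parent function:
   f x = None iff x is the root, f x = Some y iff y is the parent of x.
   st_on e S par f : the restriction of f to S is a search tree on G[S]
   whose root has parent par (recursive definition of search trees:
   root r in S, and the children of r are the roots of search trees on
   the connected components of G[S] - r). *)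
Inductive st_on (e : rel V) : {set V} -> option V -> (V -> option V) -> Prop :=
| st_intro (S : {set V}) (par : option V) (f : V -> option V) (r : V) :
    r \in S -> connected_on e S -> f r = par ->
    (forall x, x \in S :\ r -> st_on e (comp e (S :\ r) x) (Some r) f) ->
    st_on e S par f.

Definition search_tree (e : rel V) (f : {ffun V -> option V}) : Prop :=
  st_on e setT None f.

Definition parent_rel (f : {ffun V -> option V}) : rel V :=
  [rel x y | f x == Some y].

Definition subtree (f : {ffun V -> option V}) (c : V) : {set V} :=
  [set y | connect (parent_rel f) y c].

(* the ab-rotation (b a child of a) *)
Definition rotate (e : rel V) (f : {ffun V -> option V}) (a b : V)
  : {ffun V -> option V} :=
  [ffun x => if x == b then f a
             else if x == a then Some b
             else if f x == Some b then
               (if [exists y in subtree f x, e a y] then Some a else Some b)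
             else f x].

Definition rot_step (e : rel V) (f g : {ffun V -> option V}) : Prop :=
  exists a b, f b = Some a /\ g = rotate e f a b.

Definition rot_adj (e : rel V) (f g : {ffun V -> option V}) : Prop :=
  search_tree e f /\ search_tree e g /\ (rot_step e f g \/ rot_step e g f).

(* G_v : new vertex v' = None, adjacent to v and to N_G(v) *)
Definition add_twin (e : rel V) (v : V) : rel (option V) :=
  fun x y => match x, y with
  | Some x, Some y => e x y
  | None, Some y => (y == v) || e v y
  | Some x, None => (x == v) || e v x
  | None, None => false
  end.

(* T(0,1): root v' with single subtree T *)
Definition T01 (f : {ffun V -> option V}) : {ffun option V -> option (option V)} :=
  [ffun x => match x with None => None | Some x => Some (f x) end].

(* T(0,2): root v with single subtree T in which v is renamed v' *)
Definition ren (v x : V) : option V := if x == v then None else Some x.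

Definition T02 (v : V) (f : {ffun V -> option V}) : {ffun option V -> option (option V)} :=
  let h x := match f x with None => Some (Some v) | Some y => Some (ren v y) end in
  [ffun x => match x with
             | None => h v
             | Some x => if x == v then None else h x end].

Definition T0j (j : nat) (v : V) (f : {ffun V -> option V}) :=
  if j == 1 then T01 f else T02 v f.

End Defs.

From Pilot Require Import Defs.
From mathcomp Require Import all_boot.
Set Implicit Arguments. Unset Strict Implicit. Unset Printing Implicit Defensive.

(* Both T(0,1) and T(0,2) hang T below a fresh root rho of G_v, after renaming
   the vertices of G along an isomorphism i from G onto G_v - rho: for j = 1,
   rho = v' and i is the inclusion; for j = 2, rho = v and i renames v as v',
   which is an isomorphism because v' is a twin of v.  Since G_v is connected,
   a tree with root rho is a search tree of G_v as soon as the tree below rho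
   is a search tree of G_v - rho.  Subtrees, adjacency tests and hence rotations away from rho
   are transported by i, and a rotation involving rho would move rho off the
   root. *)

Lemma induced_setT (T : finType) (r : rel T) : induced r setT =2 r.
Proof. by move=> x y; rewrite /induced /= !inE. Qed.

Section LiftBelowRoot.
Variables (V W : finType) (e : rel V) (E : rel W) (i : V -> W) (rho : W).
Hypothesis i_inj : injective i.
Hypothesis i_neq_rho : forall x, i x != rho.
Hypothesis rho_or_i : forall w, w = rho \/ exists x, w = i x.
Hypothesis E_i : forall x y, E (i x) (i y) = e x y.

Lemma rho_notin_imset (A : {set V}) : (rho \in i @: A) = false.
Proof. by apply/negbTE/imsetP => -[x _ /eqP]; rewrite eq_sym (negbTE (i_neq_rho x)). Qed.

Lemma setTD1_rho : setT :\ rho = i @: setT.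
Proof.
apply/setP => w; case: (rho_or_i w) => [->|[y ->]].
  by rewrite !inE rho_notin_imset eqxx.
by rewrite !inE mem_imset // inE i_neq_rho.
Qed.

Lemma imsetD1 (S : {set V}) r : (i @: S) :\ i r = i @: (S :\ r).
Proof.
apply/setP => w; case: (rho_or_i w) => [->|[y ->]].
  by rewrite !inE !rho_notin_imset andbF.
by rewrite !inE !mem_imset // !inE (inj_eq i_inj).
Qed.

Lemma connect_imL (r : rel V) (R : rel W) :
  (forall x y, r x y -> R (i x) (i y)) ->
  forall x y, connect r x y -> connect R (i x) (i y).
Proof.
move=> r_R x y /connectP[p]; elim: p x => [|z p IHp] x /=; first by move=> _ ->.
by case/andP=> xz zp yp; apply: connect_trans (connect1 (r_R _ _ xz)) (IHp _ zp yp).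
Qed.

(* A path between two vertices of the image cannot visit the sink rho. *)
Lemma connect_im (r : rel V) (R : rel W) :
  (forall x y, R (i x) (i y) = r x y) -> (forall w, R rho w = false) ->
  forall x y, connect R (i x) (i y) = connect r x y.
Proof.
move=> R_i R_rho x y; apply/idP/idP; last by apply: connect_imL => a b; rewrite R_i.
case/connectP=> p; elim: p x => [|w p IHp] x /=; first by move=> _ /i_inj ->.
case/andP=> xw wp yp; case: (rho_or_i w) => [rho_w|[z w_z]].
  subst w; case: p wp yp {IHp} => [|w' p] /=; last by rewrite R_rho.
  by move=> _ /eqP; rewrite (negbTE (i_neq_rho y)).
by subst w; rewrite R_i in xw; apply: connect_trans (connect1 xw) (IHp _ wp yp).
Qed.

Lemma connect_sink (R : rel W) w :
  (forall w', R rho w' = false) -> connect R rho w = (w == rho).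
Proof.
move=> R_rho; apply/idP/idP; last by move/eqP->.
by case/connectP=> [[|a p]] /= => [_ ->|]; rewrite ?R_rho.
Qed.

Lemma induced_im (A : {set V}) x y : induced E (i @: A) (i x) (i y) = induced e A x y.
Proof. by rewrite /induced /= !mem_imset // E_i. Qed.

Lemma induced_rho (A : {set V}) w : induced E (i @: A) rho w = false.
Proof. by rewrite /induced /= rho_notin_imset. Qed.

Lemma comp_im (A : {set V}) x : Defs.comp E (i @: A) (i x) = i @: Defs.comp e A x.
Proof.
apply/setP => w; case: (rho_or_i w) => [->|[y ->]].
  by rewrite !inE !rho_notin_imset.
by rewrite !inE !mem_imset // inE (connect_im (induced_im A) (induced_rho A)).
Qed.

Definition liftv (o : option V) : W := if o is Some y then i y else rho.

Lemma liftv_inj : injective liftv.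
Proof.
move=> [a|] [b|] //= => [/i_inj -> //| |] /eqP;
  by rewrite ?(negbTE (i_neq_rho _)) // eq_sym (negbTE (i_neq_rho _)).
Qed.

Definition lifted (f : {ffun V -> option V}) (F : {ffun W -> option W}) :=
  F rho = None /\ forall x, F (i x) = Some (liftv (f x)).

Lemma lifted_injl f g F : lifted f F -> lifted g F -> f = g.
Proof.
move=> [_ Ff] [_ Fg]; apply/ffunP => x.
by have := Ff x; rewrite Fg => -[/liftv_inj].
Qed.

Lemma lifted_injr f F G : lifted f F -> lifted f G -> F = G.
Proof.
move=> [F_rho Ff] [G_rho Gf]; apply/ffunP => w.
by case: (rho_or_i w) => [->|[x ->]]; rewrite ?F_rho ?G_rho ?Ff ?Gf.
Qed.

Lemma st_on_im S par (f : V -> option V) (F : W -> option W) :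
  st_on e S par f -> (forall x, F (i x) = Some (liftv (f x))) ->
  st_on E (i @: S) (Some (liftv par)) F.
Proof.
elim=> {par f} S par f r rS S_conn fr _ IHst Ff.
apply: (st_intro (r := i r)); first by rewrite mem_imset.
- apply/'forall_implyP => _ /imsetP[x1 x1S ->].
  apply/'forall_implyP => _ /imsetP[x2 x2S ->].
  rewrite (connect_im (induced_im S) (induced_rho S)).
  by move/'forall_implyP: S_conn => /(_ x1 x1S) /'forall_implyP /(_ x2 x2S).
- by rewrite Ff fr.
- by move=> w; rewrite imsetD1 => /imsetP[x xS ->]; rewrite comp_im; apply: IHst.
Qed.

Lemma parent_rel_im f F : lifted f F ->
  forall x y, parent_rel F (i x) (i y) = parent_rel f x y.
Proof.
move=> [_ Ff] x y; rewrite /parent_rel /= Ff.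
case: (f x) => [z|] /=; first by rewrite !(inj_eq Some_inj) (inj_eq i_inj).
by rewrite (inj_eq Some_inj) eq_sym (negbTE (i_neq_rho y)).
Qed.

Lemma subtree_im f F : lifted f F -> forall x, subtree F (i x) = i @: subtree f x.
Proof.
move=> fF x; have parent_rho w : parent_rel F rho w = false.
  by rewrite /parent_rel /= fF.1.
apply/setP => w; case: (rho_or_i w) => [->|[y ->]].
  by rewrite rho_notin_imset inE connect_sink // (negbTE (i_neq_rho x)).
by rewrite mem_imset // !inE (connect_im (parent_rel_im fF) parent_rho).
Qed.

Lemma exists_adj_im (A : {set V}) a :
  [exists y in i @: A, E (i a) y] = [exists y in A, e a y].
Proof.
apply/existsP/existsP => [[_ /andP[/imsetP[y yA ->]]]|[y /andP[yA ay]]].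
  by rewrite E_i => ay; exists y; rewrite yA.
by exists (i y); rewrite mem_imset // yA E_i.
Qed.

Lemma rotate_lifted f F a b : lifted f F ->
  lifted (rotate e f a b) (rotate E F (i a) (i b)).
Proof.
move=> fF; have [F_rho Ff] := fF; split.
  by rewrite ffunE eq_sym (negbTE (i_neq_rho b)) eq_sym (negbTE (i_neq_rho a)) F_rho.
move=> x; rewrite !ffunE !(inj_eq i_inj).
case: eqP => _; first by rewrite Ff.
case: eqP => _ //.
have -> : (F (i x) == Some (i b)) = (f x == Some b) by apply: (parent_rel_im fF).
case: eqP => _; last by rewrite Ff.
by rewrite (subtree_im fF) exists_adj_im; case: ifP.
Qed.

(* A rotation of F at an edge below rho comes from f; one at the edge from rho
   to the root would give rho a parent. *)
Lemma rot_step_lifted f1 f2 F1 F2 : lifted f1 F1 -> lifted f2 F2 ->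
  rot_step e f1 f2 <-> rot_step E F1 F2.
Proof.
move=> f1F1 f2F2; split.
  case=> a [b [ba f2_rot]]; subst f2; exists (i a), (i b).
  split; first by rewrite f1F1.2 ba.
  exact: lifted_injr f2F2 (rotate_lifted a b f1F1).
case=> a [b [ba F2_rot]].
case: (rho_or_i b) => [b_rho|[b' b_b']]; subst b; first by rewrite f1F1.1 in ba.
move: ba; rewrite f1F1.2 => -[a_f1]; subst a.
case f1b: (f1 b') F2_rot => [a'|] /= F2_rot.
  exists a', b'; split=> //; apply: lifted_injl f2F2 _.
  by rewrite F2_rot; apply: rotate_lifted.
by move: f2F2.1; rewrite F2_rot ffunE eq_sym (negbTE (i_neq_rho b')) eqxx.
Qed.

Section Connected.
Variable v0 : V.
Hypotheses (E_rho_v0 : E rho (i v0)) (E_v0_rho : E (i v0) rho).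
Hypothesis e_conn : forall x y, connect e x y.

Lemma E_conn w1 w2 : connect E w1 w2.
Proof.
have ii x y : connect E (i x) (i y).
  by apply: connect_imL (e_conn x y) => a b; rewrite E_i.
case: (rho_or_i w1) => [->|[x1 ->]]; case: (rho_or_i w2) => [->|[x2 ->]] //.
- exact: connect_trans (connect1 E_rho_v0) (ii _ _).
- exact: connect_trans (ii _ _) (connect1 E_v0_rho).
Qed.

Lemma search_tree_lifted f F : search_tree e f -> lifted f F -> search_tree E F.
Proof.
move=> f_st [F_rho Ff]; apply: (st_intro (r := rho)) => //.
  by apply/'forall_implyP => w1 _; apply/'forall_implyP => w2 _;
     rewrite (eq_connect (induced_setT E)) E_conn.
move=> w; rewrite setTD1_rho => /imsetP[x _ ->]; rewrite comp_im.
have -> : Defs.comp e setT x = setT.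
  by apply/setP => y; rewrite !inE (eq_connect (induced_setT e)) e_conn.
exact: st_on_im f_st Ff.
Qed.

Lemma rot_adj_lifted f1 f2 F1 F2 :
  search_tree e f1 -> search_tree e f2 -> lifted f1 F1 -> lifted f2 F2 ->
  rot_adj e f1 f2 <-> rot_adj E F1 F2.
Proof.
move=> f1_st f2_st f1F1 f2F2; rewrite /rot_adj.
have := rot_step_lifted f1F1 f2F2; have := rot_step_lifted f2F2 f1F1.
have := search_tree_lifted f1_st f1F1; have := search_tree_lifted f2_st f2F2.
tauto.
Qed.

Lemma rotation_graph_lifted (L : {ffun V -> option V} -> {ffun W -> option W}) :
  (forall f, lifted f (L f)) ->
  (forall T, search_tree e T -> search_tree E (L T)) /\
  exists phi : {ffun V -> option V} -> {ffun W -> option W},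
    [/\ (forall T, search_tree e T -> exists T0, search_tree e T0 /\ phi T = L T0),
        (forall U, (exists T0, search_tree e T0 /\ U = L T0) ->
           exists T, search_tree e T /\ phi T = U),
        (forall T1 T2, search_tree e T1 -> search_tree e T2 -> phi T1 = phi T2 -> T1 = T2)
      & (forall T1 T2, search_tree e T1 -> search_tree e T2 ->
           (rot_adj e T1 T2 <-> rot_adj E (phi T1) (phi T2)))].
Proof.
move=> L_lifted; split=> [T T_st|]; first exact: search_tree_lifted T_st (L_lifted T).
exists L; split=> [T T_st|_ [T [T_st ->]]|T1 T2 _ _ L12|T1 T2 T1_st T2_st].
- by exists T.
- by exists T.
- by apply: lifted_injl (L_lifted T1) _; rewrite L12.
- exact: rot_adj_lifted (L_lifted T1) (L_lifted T2).
Qed.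

End Connected.

End LiftBelowRoot.

Lemma T01_lifted (V : finType) (f : {ffun V -> option V}) : lifted Some None f (T01 f).
Proof. by split=> [|x]; rewrite ffunE //; case: (f x). Qed.

Section Twin.
Variables (V : finType) (v : V).

Lemma ren_inj : injective (ren v).
Proof.
move=> x y; rewrite /ren.
by case: (eqVneq x v) => [->|xv]; case: (eqVneq y v) => [->|yv] // [].
Qed.

Lemma ren_neq_v x : ren v x != Some v.
Proof. by rewrite /ren; case: (eqVneq x v) => // xv; rewrite (inj_eq Some_inj). Qed.

Lemma v_or_ren w : w = Some v \/ exists x, w = ren v x.
Proof.
case: w => [x|]; last by right; exists v; rewrite /ren eqxx.
case: (eqVneq x v) => [->|xv]; first by left.
by right; exists x; rewrite /ren (negbTE xv).
Qed.

Lemma add_twin_ren (e : rel V) : symmetric e -> irreflexive e ->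
  forall x y, add_twin e v (ren v x) (ren v y) = e x y.
Proof.
move=> e_sym e_irr x y; rewrite /ren.
case: (eqVneq x v) => [->|xv]; case: (eqVneq y v) => [->|yv] /=;
  by rewrite ?e_irr ?(negbTE xv) ?(negbTE yv) // e_sym.
Qed.

Lemma T02_lifted (f : {ffun V -> option V}) : lifted (ren v) (Some v) f (T02 v f).
Proof.
split=> [|x]; rewrite ffunE /= ?eqxx // /ren.
by case: (eqVneq x v) => [->|xv] /=; rewrite ?eqxx ?(negbTE xv); case: (f _).
Qed.

End Twin.

Theorem proposition2p9 (V : finType) (e : rel V)
  (e_sym : symmetric e) (e_irr : irreflexive e)
  (G_conn : forall x y : V, connect e x y)
  (v : V) (j : nat) (hj : (j == 1) || (j == 2)) :
  (forall T, search_tree e T -> search_tree (add_twin e v) (T0j j v T)) /\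
  exists phi : {ffun V -> option V} -> {ffun option V -> option (option V)},
    [/\ (forall T, search_tree e T -> exists T0, search_tree e T0 /\ phi T = T0j j v T0),
        (forall U, (exists T0, search_tree e T0 /\ U = T0j j v T0) ->
           exists T, search_tree e T /\ phi T = U),
        (forall T1 T2, search_tree e T1 -> search_tree e T2 -> phi T1 = phi T2 -> T1 = T2)
      & (forall T1 T2, search_tree e T1 -> search_tree e T2 ->
           (rot_adj e T1 T2 <-> rot_adj (add_twin e v) (phi T1) (phi T2)))].
Proof.
case/orP: hj => /eqP ->; rewrite /T0j /=.
- apply: (rotation_graph_lifted Some_inj _ _ _ (v0 := v) _ _ G_conn (@T01_lifted V));
    rewrite /= ?eqxx //.
  by case=> [x|]; [right; exists x | left].
- apply: (rotation_graph_lifted (@ren_inj V v) (ren_neq_v v) (v_or_ren v)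
            (add_twin_ren v e_sym e_irr) (v0 := v) _ _ G_conn (T02_lifted v));
    by rewrite /ren eqxx /= eqxx.
Qed.
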